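(* There is an absolute constant $c>0$ such that for every integer $k\ge 1$ and every integer $n\ge 2k$, there exists an $n$-vertex graph $G$ of pathwidth $k$ such that every EPG-representation of $G$ uses at least $c\,kn$ grid-edges (hence lies in a grid of area at least $c\,kn$).
   Context: The $w\times h$-grid consists of all grid-points $(i,j)$ with integer coordinates $1\le i\le w$, $1\le j\le h$, and all grid-edges joining grid-points at distance $1$; its area is $wh$. An EPG-representation of a graph $G$ assigns to each vertex $v$ a path $\mathrm{path}(v)$ in the grid such that $(v,w)$ is an edge of $G$ if and only if $\mathrm{path}(v)$ and $\mathrm{path}(w)$ share a grid-edge. The pathwidth of $G$ is the smallest $k$ such that $G$ is a subgraph of a $(k+1)$-colourable interval graph (an interval graph is the intersection graph of a family of closed intervals of the real line). *)

From HB Require Import structures.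
From mathcomp Require Import all_boot all_order all_algebra.
Set Implicit Arguments. Unset Strict Implicit. Unset Printing Implicit Defensive.
Import Order.TTheory GRing.Theory Num.Theory.
Local Open Scope ring_scope.

Definition simple_graph (n : nat) (G : rel 'I_n) : Prop :=
  (forall u v, G u v = G v u) /\ (forall v, ~~ G v v).

(* G is a (spanning) subgraph of a (k+1)-colourable interval graph:
   closed intervals [a v, b v] of the rational line, an interval graph H
   where u ~ v (u <> v) iff the intervals intersect, every edge of G is an
   edge of H, and a proper (k+1)-colouring col of H. *)
Definition intervals_meet (n : nat) (a b : 'I_n -> rat) (u v : 'I_n) : bool :=
  (a u <= b v) && (a v <= b u).

Definition subgraph_of_colourable_interval (n : nat) (G : rel 'I_n) (m : nat) : Prop :=
  exists (a b : 'I_n -> rat) (col : 'I_n -> 'I_m),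
    (forall v, a v <= b v) /\
    (forall u v, G u v -> intervals_meet a b u v) /\
    (forall u v, u != v -> intervals_meet a b u v -> col u != col v).

Definition pathwidth (n : nat) (G : rel 'I_n) (k : nat) : Prop :=
  subgraph_of_colourable_interval G k.+1 /\
  (forall j : nat, (j < k)%N -> ~ subgraph_of_colourable_interval G j.+1).

Definition gpoint := (int * int)%type.

Definition gadj (p q : gpoint) : bool :=
  `|p.1 - q.1| + `|p.2 - q.2| == 1.

Definition grid_path (s : seq gpoint) : bool :=
  if s is x :: s' then uniq s && path gadj x s' else false.

(* lexicographic order used to normalise an undirected grid-edge *)
Definition lexle (p q : gpoint) : bool :=
  (p.1 < q.1) || ((p.1 == q.1) && (p.2 <= q.2)).

Definition norm_edge (p q : gpoint) : gpoint * gpoint :=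
  if lexle p q then (p, q) else (q, p).

Definition gedges (s : seq gpoint) : seq (gpoint * gpoint) :=
  [seq norm_edge e.1 e.2 | e <- zip s (behead s)].

Definition share_edge (s t : seq gpoint) : bool :=
  has (fun e => e \in gedges t) (gedges s).

Definition EPG_rep (n : nat) (G : rel 'I_n) (rep : 'I_n -> seq gpoint) : Prop :=
  (forall v, grid_path (rep v)) /\
  (forall u v, u != v -> (G u v <-> share_edge (rep u) (rep v))).

Definition num_grid_edges (n : nat) (rep : 'I_n -> seq gpoint) : nat :=
  size (undup (flatten [seq gedges (rep v) | v <- enum 'I_n])).

From HB Require Import structures.
From mathcomp Require Import all_boot all_order all_algebra.
From mathcomp Require Import zify.
Import Order.TTheory GRing.Theory Num.Theory.
Local Open Scope ring_scope.

(* The witness is the complete bipartite graph K_{k,n-k}. Its pathwidth is k: the k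
   vertices of the small side get long intervals with distinct colours and the other
   vertices pairwise disjoint point intervals of one extra colour; conversely, in any
   interval model the interval ending first contains the right endpoint of itself and
   of its at least k neighbours, so k + 1 colours are needed. In an EPG representation
   every pair of vertices from opposite sides shares a grid-edge, and no grid-edge is
   shared by two vertices of the same (independent) side, so these k(n-k) >= kn/2
   grid-edges are pairwise distinct. *)

Lemma colours_of_common_point {n m} {a b : 'I_n -> rat} {col : 'I_n -> 'I_m}
    x (C : {set 'I_n}) :
  (forall u v, u != v -> intervals_meet a b u v -> col u != col v) ->
  (forall v, v \in C -> a v <= x <= b v) -> (#|C| <= m)%N.
Proof.
move=> proper_col x_in; rewrite -(card_in_imset (f := col)).
  by rewrite -[X in (_ <= X)%N]card_ord max_card.
move=> u v /x_in /andP[au bu] /x_in /andP[av bv] /eqP; apply: contraTeq => neq_uv.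
by apply: proper_col => //; rewrite /intervals_meet (le_trans au bv) (le_trans av bu).
Qed.

Lemma colourable_interval_min_degree {n m d} {G : rel 'I_n} : (0 < n)%N ->
  (forall v, ~~ G v v) -> (forall w, d <= #|[set v | G w v]|)%N ->
  subgraph_of_colourable_interval G m -> (d < m)%N.
Proof.
move=> n_gt0 irrG deg [a [b [col [ab [Gmeet proper_col]]]]].
have [w _ min_bw] := @arg_minP _ _ _ (Ordinal n_gt0) xpredT b erefl.
pose C := w |: [set v | G w v].
have w_notin : w \notin [set v | G w v] by rewrite inE.
apply: leq_trans (colours_of_common_point (b w) C proper_col _).
  by rewrite cardsU1 w_notin ltnS.
move=> v; rewrite !inE => /predU1P[-> | Gwv]; first by rewrite ab lexx.
by rewrite min_bw // andbT; case/andP: (Gmeet _ _ Gwv).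
Qed.

Definition common_edge (s t : seq gpoint) : gpoint * gpoint :=
  nth ((0, 0), (0, 0)) (gedges s) (find (fun e => e \in gedges t) (gedges s)).

Lemma common_edgeP (s t : seq gpoint) : share_edge s t ->
  common_edge s t \in gedges s /\ common_edge s t \in gedges t.
Proof. by move=> st; split; [apply: mem_nth; rewrite -has_find | apply: nth_find]. Qed.

Lemma EPG_rep_adj {n} {G : rel 'I_n} {rep u v e} : EPG_rep G rep -> u != v ->
  e \in gedges (rep u) -> e \in gedges (rep v) -> G u v.
Proof. by move=> [_ repG] neq_uv eu ev; apply/(repG _ _ neq_uv)/hasP; exists e. Qed.

Lemma num_grid_edges_biclique {n} {G : rel 'I_n} {rep} (A B : {set 'I_n}) :
  EPG_rep G rep -> [disjoint A & B] ->
  {in A &, forall u v, ~~ G u v} -> {in B &, forall u v, ~~ G u v} ->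
  {in A & B, forall u v, G u v} ->
  (#|A| * #|B| <= num_grid_edges rep)%N.
Proof.
move=> repG disjAB indA indB GAB.
pose f (p : 'I_n * 'I_n) := common_edge (rep p.1) (rep p.2).
have f_shared p : p \in setX A B ->
    f p \in gedges (rep p.1) /\ f p \in gedges (rep p.2).
  case: p => u v /setXP[Au Bv]; apply: common_edgeP; case: repG => _ repG.
  apply/repG; last exact: GAB.
  by apply: contraTneq Bv => /= <-; rewrite (disjointFr disjAB Au).
have same_vertex (S : {set 'I_n}) u v e : {in S &, forall u v, ~~ G u v} ->
    u \in S -> v \in S -> e \in gedges (rep u) -> e \in gedges (rep v) -> u = v.
  move=> indS Su Sv eu ev; apply/eqP; apply: contraNT (indS _ _ Su Sv) => neq_uv.
  exact: EPG_rep_adj repG neq_uv eu ev.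
have f_inj : {in setX A B &, injective f}.
  move=> [u v] [u' v'] uvAB uvAB' eq_f.
  have /setXP[Au Bv] := uvAB; have /setXP[Au' Bv'] := uvAB'.
  have [eu ev] := f_shared _ uvAB; have [eu' ev'] := f_shared _ uvAB'.
  rewrite /= eq_f in eu ev.
  by rewrite (same_vertex _ _ _ _ indA Au Au' eu eu')
             (same_vertex _ _ _ _ indB Bv Bv' ev ev').
rewrite -cardsX cardE -(size_map f); apply: uniq_leq_size.
  by rewrite map_inj_in_uniq ?enum_uniq // => p q; rewrite !mem_enum; exact: f_inj.
move=> e /mapP[p]; rewrite mem_enum => pAB ->; rewrite mem_undup.
by apply/flatten_mapP; exists p.1; [rewrite mem_enum | case: (f_shared p pAB)].
Qed.

Definition lower_part (n k : nat) : {set 'I_n} := [set v : 'I_n | (v < k)%N].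

Lemma card_lower_part n k : (k <= n)%N -> #|lower_part n k| = k.
Proof.
move=> le_kn; have widen_inj : injective (widen_ord le_kn).
  by move=> u v /(congr1 val) /= /val_inj.
rewrite -[RHS](card_ord k) -(card_imset _ widen_inj).
congr #|pred_of_set _|; apply/setP => v; rewrite inE.
apply/idP/imsetP => [lt_vk | [u _ ->] /=]; last exact: ltn_ord.
by exists (Ordinal lt_vk) => //; apply: val_inj.
Qed.

Lemma card_upper_part n k : (k <= n)%N -> #|~: lower_part n k| = (n - k)%N.
Proof.
move=> le_kn; have := cardsC (lower_part n k).
by rewrite card_lower_part // card_ord; lia.
Qed.

Definition complete_bipartite (n k : nat) : rel 'I_n :=
  fun u v => (u < k)%N != (v < k)%N.

Lemma complete_bipartite_simple n k : simple_graph (complete_bipartite n k).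
Proof. by split=> [u v|v]; rewrite /complete_bipartite ?eqxx // eq_sym. Qed.

Lemma complete_bipartite_neighbours n k (w : 'I_n) :
  [set v | complete_bipartite n k w v] =
  if (w < k)%N then ~: lower_part n k else lower_part n k.
Proof.
apply/setP => v.
by case: ifP => w_k; rewrite !inE /complete_bipartite w_k; case: (v < k)%N.
Qed.

Lemma complete_bipartite_min_degree n k (w : 'I_n) : (2 * k <= n)%N ->
  (k <= #|[set v | complete_bipartite n k w v]|)%N.
Proof.
move=> le_2k_n; have le_kn : (k <= n)%N by lia.
rewrite complete_bipartite_neighbours; case: ifP => _; last by rewrite card_lower_part.
by rewrite card_upper_part //; lia.
Qed.

Lemma complete_bipartite_interval_colouring n k :
  subgraph_of_colourable_interval (complete_bipartite n k) k.+1.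
Proof.
pose a (v : 'I_n) : rat := if (v < k)%N then 0 else v%:R.
pose b (v : 'I_n) : rat := if (v < k)%N then n%:R else v%:R.
(* the large vertices share colour k, so their point intervals must be disjoint *)
exists a, b, (fun v => inord (minn v k)).
have le_vn (v : 'I_n) : (v <= n)%N by exact: ltnW.
split; [|split].
- by move=> v; rewrite /a /b; case: ifP.
- move=> u v; rewrite /complete_bipartite /intervals_meet /a /b.
  by case: (ltnP u k); case: (ltnP v k); rewrite //= ?ler_nat ?ler0n ?le_vn.
- move=> u v neq_uv; apply: contraTneq => /(congr1 val).
  rewrite /= !inordK ?ltnS ?geq_minr // /intervals_meet /a /b.
  case: (ltnP u k) => [lt_uk | le_ku]; case: (ltnP v k) => [lt_vk | le_kv].
  + by move/val_inj/eqP; rewrite (negbTE neq_uv).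
  + by move=> eq_uk; move: lt_uk; rewrite eq_uk ltnn.
  + by move=> eq_kv; move: lt_vk; rewrite -eq_kv ltnn.
  + move=> _; rewrite !ler_nat -eqn_leq; apply: contra neq_uv => /eqP eq_uv.
    by apply/eqP/val_inj.
Qed.

Lemma pathwidth_complete_bipartite n k : (2 * k <= n)%N ->
  pathwidth (complete_bipartite n k) k.
Proof.
move=> le_2k_n; split=> [|j lt_jk colourable].
  exact: complete_bipartite_interval_colouring.
have n_gt0 : (0 < n)%N by lia.
have := colourable_interval_min_degree n_gt0 (complete_bipartite_simple n k).2
  (fun w => complete_bipartite_min_degree n k w le_2k_n) colourable.
lia.
Qed.

Lemma num_grid_edges_complete_bipartite n k rep : (k <= n)%N ->
  EPG_rep (complete_bipartite n k) rep -> (k * (n - k) <= num_grid_edges rep)%N.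
Proof.
move=> le_kn repG.
have := num_grid_edges_biclique (lower_part n k) (~: lower_part n k) repG.
rewrite card_lower_part // card_upper_part //; apply.
- by rewrite -setI_eq0 setICr.
- by move=> u v; rewrite !inE /complete_bipartite => -> ->.
- by move=> u v; rewrite !inE /complete_bipartite => /negbTE -> /negbTE ->.
- by move=> u v; rewrite !inE /complete_bipartite => -> /negbTE ->.
Qed.

Theorem corollary5 :
  exists c : rat, 0 < c /\
    forall k n : nat, (1 <= k)%N -> (2 * k <= n)%N ->
      exists G : rel 'I_n,
        simple_graph G /\ pathwidth G k /\
        forall rep : 'I_n -> seq gpoint, EPG_rep G rep ->
          c * k%:R * n%:R <= (num_grid_edges rep)%:R.
Proof.
exists 2^-1; split=> // k n _ le_2k_n.
exists (complete_bipartite n k); split; first exact: complete_bipartite_simple.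
split=> [|rep repG]; first exact: pathwidth_complete_bipartite.
have le_kn : (k <= n)%N by lia.
have kn_le : (k * n <= 2 * (k * (n - k)))%N.
  rewrite -{1}(subnKC le_kn) mulnDr mul2n -addnn leq_add2r leq_mul2l.
  by apply/orP; right; lia.
have := num_grid_edges_complete_bipartite n k rep le_kn repG.
rewrite -mulrA ler_pdivrMl // -natrM -(natrM _ 2) ler_nat => edges_ge.
lia.
Qed.
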